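(* Let $\mu\in\mathcal{RP}_p(\mathbb{C})$ have radial CDF $\Phi_0$ with $\inf\{x\ge0:\Phi_0(x)=1\}=1$. Then $\lim_{t\to1^-}\Phi_t((1-t)r)=r$ for every fixed $r\in(0,1)$, where $\Phi_t$ is the radial CDF of $\mu^t$, the differentiation flow starting from $\mu$.
   Context: $\mathcal{RP}_p(\mathbb{C})$: rotationally invariant probability measures $\mu$ on $\mathbb{C}$ with $\int_0^1\mu(\mathbb{D}_r)r^{-1}dr<\infty$, $\mathbb{D}_r=\{|z|<r\}$. Radial CDF: $\Phi(r)=\nu(\{|z|\le r\})$; quantile function $\Phi^{\langle-1\rangle}(x)=\inf\{r:\Phi(r)\ge x\}$. The differentiation flow starting from $\mu$ (radial CDF $\Phi_0$) is the family of rotationally invariant probability measures $\mu^t$, $0\le t<1$, whose radial CDFs $\Phi_t$ satisfy $\Phi_t^{\langle-1\rangle}(x)=\frac{x(1-t)\Phi_0^{\langle-1\rangle}((1-t)x+t)}{x(1-t)+t}$ for $x\in(0,1)$. *)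

(* The complex plane C is modelled as R * R
   (z = (Re z, Im z)) with its product (Borel) sigma-algebra. *)
From HB Require Import structures.
From mathcomp Require Import all_boot all_order all_algebra.
From mathcomp Require Import all_classical all_reals all_analysis.
Set Implicit Arguments. Unset Strict Implicit. Unset Printing Implicit Defensive.
Import Order.TTheory GRing.Theory Num.Theory.
Local Open Scope classical_set_scope.
Local Open Scope ring_scope.

Section RadialDefs.
Context {R : realType}.

Definition cmod (z : R * R) : R := Num.sqrt (z.1 ^+ 2 + z.2 ^+ 2).

(* rotation z |-> e^{i th} z *)
Definition crot (th : R) (z : R * R) : R * R :=
  (cos th * z.1 - sin th * z.2, sin th * z.1 + cos th * z.2).

Definition disc (r : R) : set (R * R) := [set z | cmod z < r].

Definition rot_invariant (mu : probability (R * R)%type R) : Prop :=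
  forall (th : R) (A : set (R * R)), measurable A ->
    mu (crot th @^-1` A) = mu A.

Definition RPp (mu : probability (R * R)%type R) : Prop :=
  rot_invariant mu /\
  (\int[lebesgue_measure]_(r in `]0%R, 1%R[) (mu (disc r) * (r^-1)%:E) < +oo)%E.

Definition radial_cdf (mu : probability (R * R)%type R) (r : R) : R :=
  fine (mu [set z | cmod z <= r]).

Definition quantile (Phi : R -> R) (x : R) : R := inf [set r | x <= Phi r].

Definition diff_flow (mu : probability (R * R)%type R)
    (mut : R -> probability (R * R)%type R) : Prop :=
  forall t : R, 0 <= t < 1 ->
    rot_invariant (mut t) /\
    forall x : R, 0 < x < 1 ->
      quantile (radial_cdf (mut t)) x =
      x * (1 - t) * quantile (radial_cdf mu) ((1 - t) * x + t) / (x * (1 - t) + t).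

End RadialDefs.

(* The flow formula rescales to
     Q_t(x) / (1 - t) = x Q_0((1 - t) x + t) / ((1 - t) x + t),
   where Q_t is the radial quantile function of mu^t.  Since the radial
   support of mu ends exactly at 1, Q_0(w) -> 1 as w -> 1-, hence
   Q_t(x) / (1 - t) -> x for every x in (0, 1): rescaled by 1 - t, the radial
   quantiles of mu^t approach those of the uniform law on [0, 1].  Quantile
   functions and CDFs being generalized inverses of each other, the rescaled
   CDFs Phi_t((1 - t) r) then converge to r. *)
From HB Require Import structures.
From mathcomp Require Import all_boot all_order all_algebra.
From mathcomp Require Import all_classical all_reals all_analysis.
From mathcomp Require Import lra ring.
Import Order.TTheory GRing.Theory Num.Theory.
Import numFieldNormedType.Exports.
Local Open Scope classical_set_scope.
Local Open Scope ring_scope.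

Lemma cvgr_ge_lt {R : realFieldType} {T} {F : set_system T} {FF : Filter F}
    (f : T -> R) (a l b : R) : a < l < b ->
  (forall x, a < x < l -> \forall t \near F, x <= f t) ->
  (forall y, l < y < b -> \forall t \near F, f t < y) ->
  f @ F --> l.
Proof.
move=> /andP[al lb] lower upper; apply/cvgrPdist_lt => e e0.
set x := Num.max ((a + l) / 2) (l - e / 2).
set y := Num.min ((l + b) / 2) (l + e / 2).
have ax : a < x by rewrite lt_max; apply/orP; left; lra.
have xl : x < l by rewrite gt_max; apply/andP; split; lra.
have lex : l - e < x by rewrite lt_max; apply/orP; right; lra.
have ly : l < y by rewrite lt_min; apply/andP; split; lra.
have yb : y < b by rewrite gt_min; apply/orP; left; lra.
have yle : y < l + e by rewrite gt_min; apply/orP; right; lra.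
have [x_in y_in] : a < x < l /\ l < y < b by rewrite ax xl ly yb.
apply: filterS2 (lower x x_in) (upper y y_in) => t xf fy.
by rewrite ltr_distlC; apply/andP; split; lra.
Qed.

Section radial_cdf.
Context {R : realType}.

Lemma measurable_cmod : measurable_fun setT (@cmod R).
Proof.
apply: measurableT_comp.
  exact: measurable_realfun.continuous_measurable_fun (@sqrt_continuous R).
by apply: measurable_realfun.measurable_funD;
  apply: measurable_realfun.measurable_funX; [exact: measurable_fst|exact: measurable_snd].
Qed.

HB.instance Definition _ :=
  isMeasurableFun.Build _ _ _ _ (@cmod R) measurable_cmod.

Variable mu : probability (R * R)%type R.

Lemma radial_cdfE r : radial_cdf mu r = fine (cdf (@cmod R : {RV mu >-> R}) r).
Proof.
by rewrite /radial_cdf /cdf /distribution /pushforward; congr (fine (mu _)).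
Qed.

Lemma radial_cdf_nondecreasing : {homo radial_cdf mu : a b / a <= b}.
Proof.
by move=> a b ab; rewrite !radial_cdfE fine_le ?fin_num_measure ?cdf_nondecreasing.
Qed.

Lemma radial_cdf_lt0 r : r < 0 -> radial_cdf mu r = 0.
Proof.
move=> r0; rewrite /radial_cdf (_ : [set z | _] = set0) ?measure0//.
by apply/seteqP; split => z //=; rewrite leNgt (lt_le_trans r0) ?sqrtr_ge0.
Qed.

Lemma radial_cdf_cvgy : radial_cdf mu r @[r --> +oo] --> (1 : R).
Proof. by under eq_fun do rewrite radial_cdfE; exact/fine_cvg/cvg_cdfy1. Qed.

End radial_cdf.

Section quantile.
Context {R : realType} {Phi : R -> R}.
Hypothesis Phi_nd : {homo Phi : a b / a <= b}.
Hypothesis Phi_lt0 : forall r, r < 0 -> Phi r = 0.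
Hypothesis Phi_cvgy : Phi r @[r --> +oo] --> (1 : R).

(* [inf] is junk (e.g. [inf set0 = 0]) unless the level set is nonempty and
   bounded below, which the two facts below guarantee for levels in (0, 1). *)
Let level_lbound x : 0 < x -> has_lbound [set r | x <= Phi r].
Proof.
move=> x0; exists 0 => r /=; apply: contraLR; rewrite -!ltNge => r0.
by rewrite Phi_lt0.
Qed.

Let level_neq0 x : x < 1 -> [set r | x <= Phi r] !=set0.
Proof. by move=> x1; apply: filter_ex (cvgr_ge _ Phi_cvgy _ x1). Qed.

Lemma quantile_le {x y} : 0 < x -> x <= Phi y -> quantile Phi x <= y.
Proof. by move=> x0 xy; apply: ge_inf; [exact: level_lbound|]. Qed.

Lemma le_cdf_of_quantile_lt {x y} : x < 1 -> quantile Phi x < y -> x <= Phi y.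
Proof.
move=> x1 /(inf_lt (level_neq0 _ x1))[s /= xs sy].
by rewrite (le_trans xs) // Phi_nd // ltW.
Qed.

Lemma quantile_cvg_left1 (b : R) : 0 < b ->
  inf [set x | 0 <= x /\ Phi x = 1] = b -> quantile Phi w @[w --> 1^'-] --> b.
Proof.
set E := [set x | _ /\ _] => b0 infE.
have E_neq0 : E !=set0.
  apply/set0P/negP => /eqP E0.
  by move: infE; rewrite E0 inf0 => /eqP; rewrite lt_eqF.
have E_ge x : E x -> b <= x.
  by move=> Ex; rewrite -infE; apply: ge_inf => //; exists 0 => z [].
have Phi_lt1 y : y < b -> Phi y < 1.
  move=> yb; have [y0|y0] := ltP y 0; first by rewrite Phi_lt0.
  have [z Ez] := E_neq0.
  have Phiy_le1 : Phi y <= 1.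
    by case: (Ez) => _ <-; apply/Phi_nd/(le_trans (ltW yb))/E_ge.
  rewrite lt_neqAle Phiy_le1 andbT; apply: contraTneq yb => Phiy1.
  by rewrite -leNgt; apply: E_ge.
apply/cvgrPdist_lt => e e0.
have [z Ez zbe] : exists2 z, E z & z < b + e.
  by apply: inf_lt; rewrite ?infE ?ltrDl.
have Phi_b_e : Phi (b - e / 2) < 1 by rewrite Phi_lt1 // gtrBl divr_gt0.
near=> w.
have w1 : w < 1 by near: w; exact: nbhs_left_lt.
have w0 : 0 < w by near: w; exact: nbhs_left_gt.
have Qz : quantile Phi w <= z.
  by apply: quantile_le => //; case: Ez => _ ->; exact: ltW.
have bQ : b - e / 2 <= quantile Phi w.
  rewrite leNgt; apply/negP => /(le_cdf_of_quantile_lt w1).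
  by apply/negP; rewrite -ltNge; near: w; exact: nbhs_left_gt.
by rewrite ltr_distlC; apply/andP; split; lra.
Unshelve. all: by end_near.
Qed.

End quantile.

Lemma radial_cdf_cvg_of_quantile {R : realType} {T} (F : set_system T)
    {FF : Filter F} (nu : T -> probability (R * R)%type R) (c : T -> R) :
  (\forall t \near F, 0 < c t) ->
  (forall x, 0 < x < 1 -> quantile (radial_cdf (nu t)) x / c t @[t --> F] --> x) ->
  forall r, 0 < r < 1 -> radial_cdf (nu t) (c t * r) @[t --> F] --> r.
Proof.
move=> c_gt0 cvgQ r /andP[r0 r1].
apply: (cvgr_ge_lt _ 0 _ 1); first by rewrite r0 r1.
- move=> x /andP[x0 xr]; have x1 := lt_trans xr r1.
  have x01 : 0 < x < 1 by rewrite x0 x1.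
  near=> t.
  apply: (le_cdf_of_quantile_lt (radial_cdf_nondecreasing _) (radial_cdf_cvgy _) x1).
  rewrite mulrC -ltr_pdivrMr; last by near: t.
  by near: t; exact: cvgr_lt (cvgQ x x01) _ xr.
- move=> y /andP[ry y1]; have y0 := lt_trans r0 ry.
  have y01 : 0 < y < 1 by rewrite y0 y1.
  near=> t.
  rewrite ltNge; apply/negP => /(quantile_le (radial_cdf_lt0 (nu t)) y0).
  apply/negP; rewrite -ltNge mulrC -ltr_pdivlMr; last by near: t.
  by near: t; exact: cvgr_gt (cvgQ y y01) _ ry.
Unshelve. all: by end_near.
Qed.

Section differentiation_flow.
Context {R : realType} (mu : probability (R * R)%type R)
  (mut : R -> probability (R * R)%type R).
Hypothesis radial_support1 : inf [set x : R | 0 <= x /\ radial_cdf mu x = 1] = 1.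
Hypothesis flow : diff_flow mu mut.

Lemma diff_flow_quantile_cvg x : 0 < x < 1 ->
  quantile (radial_cdf (mut t)) x / (1 - t) @[t --> 1^'-] --> x.
Proof.
move=> /andP[x0 x1].
pose g t := (1 - t) * x + t.
have g1 : g 1 = 1 by rewrite /g subrr mul0r add0r.
have g_cvg : g t @[t --> 1^'-] --> g 1.
  apply: cvg_at_left_filter; apply: cvgD; last exact: cvg_id.
  by apply: cvgM; [apply: cvgB; [exact: cvg_cst | exact: cvg_id] | exact: cvg_cst].
have Qg_cvg : (quantile (radial_cdf mu) \o g) t @[t --> 1^'-] --> (1 : R).
  apply: (increasing_cvg_at_left_comp (a := BInfty _ true)) => //.
    by move=> s t _ _ st; rewrite /g; nra.
  rewrite g1; apply: quantile_cvg_left1 radial_support1 => //.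
  - exact: radial_cdf_nondecreasing.
  - exact: radial_cdf_lt0.
  - exact: radial_cdf_cvgy.
have lim : x * quantile (radial_cdf mu) (g t) / g t @[t --> 1^'-] --> (x * 1 / 1 : R).
  apply: cvgM; first by apply: cvgM; [exact: cvg_cst | exact: Qg_cvg].
  apply: cvgV; first exact: oner_neq0.
  by rewrite -[X in _ --> X]g1.
have rescaled_flow : \forall t \near 1^'-,
    x * quantile (radial_cdf mu) (g t) / g t = quantile (radial_cdf (mut t)) x / (1 - t).
  near=> t.
  have t1 : t < 1 by near: t; exact: nbhs_left_lt.
  have t0 : 0 <= t by near: t; exact: nbhs_left_ge.
  rewrite (flow t _).2 ?x0 ?x1 ?t0 // /g [x * (1 - t)]mulrC.
  by field; rewrite subr_eq0 ?gt_eqF //; nra.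
rewrite mulr1 divr1 in lim.
exact: cvg_trans (near_eq_cvg rescaled_flow) lim.
Unshelve. all: by end_near.
Qed.

End differentiation_flow.

Theorem corollary5p6 (R : realType) (mu : probability (R * R)%type R)
    (mut : R -> probability (R * R)%type R) :
  RPp mu ->
  inf [set x : R | 0 <= x /\ radial_cdf mu x = 1] = 1 ->
  diff_flow mu mut ->
  forall r : R, 0 < r < 1 ->
    radial_cdf (mut t) ((1 - t) * r) @[t --> (1 : R)^'-] --> r.
Proof.
move=> _ radial_support1 flow; apply: radial_cdf_cvg_of_quantile.
  by near=> t; rewrite subr_gt0; near: t; exact: nbhs_left_lt.
exact: (diff_flow_quantile_cvg _ _ radial_support1 flow).
Unshelve. all: by end_near.
Qed.
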